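(* Let $\mathcal T$ and $\mathcal S$ be triangulated categories and let $T:\mathcal S\to\mathcal T$ be a triangle functor. Suppose $T$ has a left (respectively right) adjoint $S$, and let $\eta:ST\to\mathrm{id}$ be the counit (respectively $\tilde\epsilon:\mathrm{id}\to ST$ the unit) of the adjunction. Then an object $Q$ of $\mathcal S$ is $T$-relative projective (respectively injective) if and only if $\eta_Q$ is a split epimorphism (respectively $\tilde\epsilon_Q$ is a split monomorphism).
   Context: An object $Q$ of $\mathcal S$ is $T$-relative projective if the natural transformation $\mathcal S(Q,-)\to\mathcal T(TQ,T-)$ induced by $T$ is injective, and $T$-relative injective if the natural transformation $\mathcal S(-,Q)\to\mathcal T(T-,TQ)$ induced by $T$ is injective. *)

From HB Require Import structures.
From mathcomp Require Import all_boot all_algebra.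
Set Implicit Arguments. Unset Strict Implicit. Unset Printing Implicit Defensive.
Import GRing.Theory.
Local Open Scope ring_scope.

Record PreaddCat := {
  Ob :> Type;
  Hom : Ob -> Ob -> zmodType;
  cid : forall X, Hom X X;
  cmp : forall X Y Z, Hom Y Z -> Hom X Y -> Hom X Z;
  cmp_idl : forall X Y (f : Hom X Y), cmp (cid Y) f = f;
  cmp_idr : forall X Y (f : Hom X Y), cmp f (cid X) = f;
  cmp_assoc : forall X Y Z W (h : Hom Z W) (g : Hom Y Z) (f : Hom X Y),
      cmp h (cmp g f) = cmp (cmp h g) f;
  cmp_addl : forall X Y Z (g g' : Hom Y Z) (f : Hom X Y),
      cmp (g + g') f = cmp g f + cmp g' f;
  cmp_addr : forall X Y Z (g : Hom Y Z) (f f' : Hom X Y),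
      cmp g (f + f') = cmp g f + cmp g f'
}.
Arguments Hom {p} X Y.
Arguments cid {p} X.
Arguments cmp {p X Y Z} g f.

Record Functor (C D : PreaddCat) := {
  fobj :> C -> D;
  fmap : forall X Y : C, Hom X Y -> Hom (fobj X) (fobj Y);
  fmap_id : forall X, fmap (cid X) = cid (fobj X);
  fmap_cmp : forall X Y Z (g : Hom Y Z) (f : Hom X Y),
      fmap (cmp g f) = cmp (fmap g) (fmap f)
}.
Arguments fmap {C D} f {X Y} _ : rename.

Definition is_iso (C : PreaddCat) (X Y : C) (f : Hom X Y) : Prop :=
  exists g : Hom Y X, cmp g f = cid X /\ cmp f g = cid Y.

Definition split_epi (C : PreaddCat) (X Y : C) (f : Hom X Y) : Prop :=
  exists s : Hom Y X, cmp f s = cid Y.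

Definition split_mono (C : PreaddCat) (X Y : C) (f : Hom X Y) : Prop :=
  exists r : Hom Y X, cmp r f = cid X.

Definition additive_functor (C D : PreaddCat) (F : Functor C D) : Prop :=
  forall (X Y : C) (f g : Hom X Y), fmap F (f + g) = fmap F f + fmap F g.

Record TriangCat := {
  tc :> PreaddCat;
  tc_zero : exists Z : tc, cid Z = 0;
  tc_biprod : forall X Y : tc, exists (P : tc) (i1 : Hom X P) (i2 : Hom Y P)
      (p1 : Hom P X) (p2 : Hom P Y),
      [/\ cmp p1 i1 = cid X, cmp p2 i2 = cid Y, cmp p1 i2 = 0, cmp p2 i1 = 0
        & cmp i1 p1 + cmp i2 p2 = cid P];
  sft : Functor tc tc;
  sft_additive : additive_functor sft;
  sft_full : forall (X Y : tc) (g : Hom (sft X) (sft Y)),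
      exists f : Hom X Y, fmap sft f = g;
  sft_faithful : forall (X Y : tc) (f f' : Hom X Y),
      fmap sft f = fmap sft f' -> f = f';
  sft_esurj : forall Y : tc, exists (X : tc) (u : Hom (sft X) Y), is_iso u;
  dist : forall X Y Z : tc, Hom X Y -> Hom Y Z -> Hom Z (sft X) -> Prop;
  tr1_id : forall (X Z : tc), cid Z = 0 -> dist (cid X) (0 : Hom X Z) (0 : Hom Z (sft X));
  tr1_iso : forall (X Y Z X' Y' Z' : tc) (f : Hom X Y) (g : Hom Y Z) (h : Hom Z (sft X))
      (f' : Hom X' Y') (g' : Hom Y' Z') (h' : Hom Z' (sft X'))
      (a : Hom X X') (b : Hom Y Y') (c : Hom Z Z'),
      is_iso a -> is_iso b -> is_iso c ->
      cmp b f = cmp f' a -> cmp c g = cmp g' b -> cmp (fmap sft a) h = cmp h' c ->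
      dist f g h -> dist f' g' h';
  tr1_ext : forall (X Y : tc) (f : Hom X Y),
      exists (Z : tc) (g : Hom Y Z) (h : Hom Z (sft X)), dist f g h;
  tr2 : forall (X Y Z : tc) (f : Hom X Y) (g : Hom Y Z) (h : Hom Z (sft X)),
      dist f g h <-> dist g h (- fmap sft f);
  tr3 : forall (X Y Z X' Y' Z' : tc) (f : Hom X Y) (g : Hom Y Z) (h : Hom Z (sft X))
      (f' : Hom X' Y') (g' : Hom Y' Z') (h' : Hom Z' (sft X'))
      (a : Hom X X') (b : Hom Y Y'),
      dist f g h -> dist f' g' h' -> cmp b f = cmp f' a ->
      exists c : Hom Z Z', cmp c g = cmp g' b /\ cmp (fmap sft a) h = cmp h' c;
  tr4 : forall (X Y Z Z' X' Y' : tc) (f : Hom X Y) (g : Hom Y Z)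
      (j : Hom Y Z') (k : Hom Z' (sft X))
      (l : Hom Z X') (i : Hom X' (sft Y))
      (m : Hom Z Y') (n : Hom Y' (sft X)),
      dist f j k -> dist g l i -> dist (cmp g f) m n ->
      exists (u : Hom Z' Y') (v : Hom Y' X'),
        [/\ cmp u j = cmp m g, cmp n u = k, cmp v m = l,
            cmp i v = cmp (fmap sft f) n
          & dist u v (cmp (fmap sft j) i)]
}.
Arguments dist {t X Y Z} f g h.
Arguments sft {t}.

Record TriangleFunctor (C D : TriangCat) := {
  tf :> Functor C D;
  tf_additive : additive_functor tf;
  tf_phi : forall X : C, Hom (tf (sft X)) (sft (tf X));
  tf_phi_iso : forall X, is_iso (tf_phi X);
  tf_phi_nat : forall (X Y : C) (f : Hom X Y),
      cmp (tf_phi Y) (fmap tf (fmap sft f)) = cmp (fmap sft (fmap tf f)) (tf_phi X);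
  tf_dist : forall (X Y Z : C) (f : Hom X Y) (g : Hom Y Z) (h : Hom Z (sft X)),
      dist f g h -> dist (fmap tf f) (fmap tf g) (cmp (tf_phi X) (fmap tf h))
}.

Definition is_adjunction (C D : PreaddCat) (L : Functor D C) (R : Functor C D)
    (unit : forall Y : D, Hom Y (R (L Y)))
    (counit : forall X : C, Hom (L (R X)) X) : Prop :=
  [/\ forall (Y Y' : D) (g : Hom Y Y'),
        cmp (unit Y') g = cmp (fmap R (fmap L g)) (unit Y),
      forall (X X' : C) (f : Hom X X'),
        cmp f (counit X) = cmp (counit X') (fmap L (fmap R f)),
      forall Y : D, cmp (counit (L Y)) (fmap L (unit Y)) = cid (L Y)
    & forall X : C, cmp (fmap R (counit X)) (unit (R X)) = cid (R X)].

Definition rel_projective (C D : PreaddCat) (T : Functor C D) (Q : C) : Prop :=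
  forall X : C, injective (fun f : Hom Q X => fmap T f).

Definition rel_injective (C D : PreaddCat) (T : Functor C D) (Q : C) : Prop :=
  forall X : C, injective (fun f : Hom X Q => fmap T f).
Arguments is_adjunction {C D} L R unit counit.

(* Under an adjunction S -| T with unit eps and counit eta we have
   k o eta_Q = eta_X o S (T k) and T k = T (k o eta_Q) o eps_(T Q), so T is
   injective on maps out of Q exactly when eta_Q is an epimorphism; dually,
   for T -| S, T is injective on maps into Q exactly when the unit at Q is a
   monomorphism.  In a triangulated category every epimorphism f splits:
   completing f to a triangle (f, g, h) gives g o f = 0, hence g = 0, and a
   triangle whose second map vanishes has a split epimorphism as first map
   (TR3 against a trivial triangle).  Dually every monomorphism f splits,
   since the rotated triangle gives (sft f) o h = 0, hence h = 0. *)
From mathcomp Require Import ssreflect ssrfun ssrbool eqtype ssralg.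
Set Implicit Arguments. Unset Strict Implicit.
Import GRing.Theory.
Local Open Scope ring_scope.

Definition epi (C : PreaddCat) (X Y : C) (f : Hom X Y) : Prop :=
  forall (W : C) (k k' : Hom Y W), cmp k f = cmp k' f -> k = k'.

Definition mono (C : PreaddCat) (X Y : C) (f : Hom X Y) : Prop :=
  forall (W : C) (k k' : Hom W X), cmp f k = cmp f k' -> k = k'.

Section Preadditive.
Variable C : PreaddCat.

Lemma cmp0l (X Y Z : C) (f : Hom X Y) : cmp (0 : Hom Y Z) f = 0.
Proof.
apply: (@addrI _ (cmp (0 : Hom Y Z) f)).
by rewrite -cmp_addl !addr0.
Qed.

Lemma cmp0r (X Y Z : C) (g : Hom Y Z) : cmp g (0 : Hom X Y) = 0.
Proof.
apply: (@addrI _ (cmp g (0 : Hom X Y))).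
by rewrite -cmp_addr !addr0.
Qed.

Lemma cmpNl (X Y Z : C) (g : Hom Y Z) (f : Hom X Y) : cmp (- g) f = - cmp g f.
Proof. by apply/eqP; rewrite -addr_eq0 -cmp_addl addNr cmp0l. Qed.

Lemma cmpNr (X Y Z : C) (g : Hom Y Z) (f : Hom X Y) : cmp g (- f) = - cmp g f.
Proof. by apply/eqP; rewrite -addr_eq0 -cmp_addr addNr cmp0r. Qed.

Lemma split_epi_epi (X Y : C) (f : Hom X Y) : split_epi f -> epi f.
Proof.
move=> [s fs] W k k' kf.
by rewrite -(cmp_idr k) -(cmp_idr k') -fs !cmp_assoc kf.
Qed.

Lemma split_mono_mono (X Y : C) (f : Hom X Y) : split_mono f -> mono f.
Proof.
move=> [r rf] W k k' fk.
by rewrite -(cmp_idl k) -(cmp_idl k') -rf -!cmp_assoc fk.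
Qed.

Lemma split_monoN (X Y : C) (f : Hom X Y) : split_mono (- f) -> split_mono f.
Proof. by move=> [r rf]; exists (- r); rewrite cmpNl -cmpNr. Qed.

End Preadditive.

Section Adjunction.
Variables (C D : PreaddCat) (L : Functor D C) (R : Functor C D).
Variables (unit : forall Y : D, Hom Y (R (L Y)))
          (counit : forall X : C, Hom (L (R X)) X).
Hypothesis adj : is_adjunction L R unit counit.

Lemma rel_projective_epi_counit (X : C) : rel_projective R X <-> epi (counit X).
Proof.
case: adj => _ counit_nat _ triangleR; split.
- move=> faithR W k k' kc; apply: (faithR W) => /=.
  rewrite -(cmp_idr (fmap R k)) -(cmp_idr (fmap R k')) -triangleR.
  by rewrite !cmp_assoc -!fmap_cmp kc.
- move=> epi_c W k k' /= Rk; apply: epi_c.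
  by rewrite counit_nat (counit_nat _ _ k') Rk.
Qed.

Lemma rel_injective_mono_unit (Y : D) : rel_injective L Y <-> mono (unit Y).
Proof.
case: adj => unit_nat _ triangleL _; split.
- move=> faithL W k k' uk; apply: (faithL W) => /=.
  rewrite -(cmp_idl (fmap L k)) -(cmp_idl (fmap L k')) -triangleL.
  by rewrite -!cmp_assoc -!fmap_cmp uk.
- move=> mono_u W k k' /= Lk; apply: mono_u.
  by rewrite unit_nat (unit_nat _ _ k') Lk.
Qed.

End Adjunction.

Section Triangulated.
Variable C : TriangCat.

Lemma sft0 (X Y : C) : fmap sft (0 : Hom X Y) = 0.
Proof.
apply: (@addrI _ (fmap sft (0 : Hom X Y))).
by rewrite -sft_additive !addr0.
Qed.

Lemma split_epi_sft (X Y : C) (f : Hom X Y) :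
  split_epi (fmap sft f) -> split_epi f.
Proof.
move=> [c]; have [s <-] := sft_full c => fs; exists s.
by apply: (@sft_faithful C); rewrite fmap_cmp fs fmap_id.
Qed.

Lemma split_mono_sft (X Y : C) (f : Hom X Y) :
  split_mono (fmap sft f) -> split_mono f.
Proof.
move=> [c]; have [r <-] := sft_full c => rf; exists r.
by apply: (@sft_faithful C); rewrite fmap_cmp rf fmap_id.
Qed.

(* Every object is isomorphic to some [sft W], on which [sft] is full and faithful. *)
Lemma mono_sft (X Y : C) (f : Hom X Y) : mono f -> mono (fmap sft f).
Proof.
move=> mono_f V a a' fa.
have [W [u [v [_ uv]]]] := sft_esurj V.
have [b Eb] := sft_full (cmp a u); have [b' Eb'] := sft_full (cmp a' u).
have fb : cmp f b = cmp f b'.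
  by apply: (@sft_faithful C); rewrite !fmap_cmp Eb Eb' !cmp_assoc fa.
have au : cmp a u = cmp a' u by rewrite -Eb -Eb' (mono_f _ _ _ fb).
by rewrite -(cmp_idr a) -(cmp_idr a') -uv !cmp_assoc au.
Qed.

Lemma dist_cmp0 (X Y Z : C) (f : Hom X Y) (g : Hom Y Z) (h : Hom Z (sft X)) :
  dist f g h -> cmp g f = 0.
Proof.
move=> Dfgh; have [Z0 Z0_zero] := tc_zero C.
have [c [cg _]] := tr3 (a := cid X) (b := f) (tr1_id X Z0_zero) Dfgh erefl.
by rewrite -cg cmp0r.
Qed.

(* TR3 from the rotation of the trivial triangle on [Y]. *)
Lemma dist_split_epi (X Y Z : C) (f : Hom X Y) (h : Hom Z (sft X)) :
  dist f (0 : Hom Y Z) h -> split_epi f.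
Proof.
move=> /tr2 Dh; have [Z0 Z0_zero] := tc_zero C.
have /tr2 Dtriv := tr1_id Y Z0_zero.
have [c [_ fc]] := tr3 (a := cid Y) (b := (0 : Hom Z0 Z)) Dtriv Dh
  ltac:(by rewrite cmp0r cmp0l).
apply: split_epi_sft; exists c; apply: oppr_inj.
by rewrite -cmpNl -fc fmap_id cmp_idl.
Qed.

(* TR3 into the triangle [0 -> Y -> Y -> sft 0], a rotation of the trivial
   triangle on [Y] whose third vertex is [sft 0]. *)
Lemma dist0_split_mono (X Y Z : C) (g : Hom Y Z) (h : Hom Z (sft X)) :
  dist (0 : Hom X Y) g h -> split_mono g.
Proof.
move=> Dgh; have [Z0 Z0_zero] := tc_zero C.
have sZ0_zero : cid (sft Z0) = 0 by rewrite -fmap_id Z0_zero sft0.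
have Dtriv : dist (0 : Hom Z0 Y) (cid Y) (0 : Hom Y (sft Z0)).
  by apply/tr2; rewrite sft0 oppr0; apply: tr1_id.
have [c [cg _]] := tr3 (a := (0 : Hom X Z0)) (b := cid Y) Dgh Dtriv
  ltac:(by rewrite cmp0r cmp0l).
by exists c; rewrite cg cmp_idl.
Qed.

Lemma dist_split_mono (X Y Z : C) (f : Hom X Y) (g : Hom Y Z) :
  dist f g (0 : Hom Z (sft X)) -> split_mono f.
Proof.
by move=> /tr2/tr2/dist0_split_mono/split_monoN/split_mono_sft.
Qed.

Lemma epi_split (X Y : C) (f : Hom X Y) : epi f -> split_epi f.
Proof.
move=> epi_f; have [Z [g [h Dfgh]]] := tr1_ext f.
have g0 : g = 0 by apply: epi_f; rewrite (dist_cmp0 Dfgh) cmp0l.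
by move: Dfgh; rewrite g0; apply: dist_split_epi.
Qed.

Lemma mono_split (X Y : C) (f : Hom X Y) : mono f -> split_mono f.
Proof.
move=> mono_f; have [Z [g [h Dfgh]]] := tr1_ext f.
have h0 : h = 0.
  apply: (mono_sft mono_f); rewrite cmp0r; apply: oppr_inj.
  by rewrite -cmpNl oppr0; move/tr2/tr2/dist_cmp0: Dfgh.
by move: Dfgh; rewrite h0; apply: dist_split_mono.
Qed.

Lemma epi_iff_split_epi (X Y : C) (f : Hom X Y) : epi f <-> split_epi f.
Proof. by split; [apply: epi_split | apply: split_epi_epi]. Qed.

Lemma mono_iff_split_mono (X Y : C) (f : Hom X Y) : mono f <-> split_mono f.
Proof. by split; [apply: mono_split | apply: split_mono_mono]. Qed.

End Triangulated.

Theorem corollary2p9 (CS CT : TriangCat) (T : TriangleFunctor CS CT) :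
  (forall (S : Functor CT CS) (eps : forall Y : CT, Hom Y (T (S Y)))
          (eta : forall X : CS, Hom (S (T X)) X),
      is_adjunction S T eps eta ->
      forall Q : CS, rel_projective T Q <-> split_epi (eta Q)) /\
  (forall (S : Functor CT CS) (epst : forall X : CS, Hom X (S (T X)))
          (etat : forall Y : CT, Hom (T (S Y)) Y),
      is_adjunction T S epst etat ->
      forall Q : CS, rel_injective T Q <-> split_mono (epst Q)).
Proof.
split=> S unit counit adj Q.
- exact: iff_trans (rel_projective_epi_counit adj Q) (epi_iff_split_epi _).
- exact: iff_trans (rel_injective_mono_unit adj Q) (mono_iff_split_mono _).
Qed.
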